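(* Let $\mathbf{x}=x_1x_2\ldots$ be an infinite word and $n\ge1$ an integer with $r(n+1,\mathbf{x})=r(n,\mathbf{x})+1$. Let $j$ be the integer with $1\le j<r(n,\mathbf{x})-n+1$ and $x_j^{j+n-1}=x_{r(n,\mathbf{x})-n+1}^{r(n,\mathbf{x})}$. Then $x_{j+n}=x_{r(n,\mathbf{x})+1}$.
   Context: $x_i^j=x_i\cdots x_j$; $r(n,\mathbf{x})=\min\{m\ge1:\ x_i^{i+n-1}=x_{m-n+1}^{m}\text{ for some } 1\le i\le m-n\}$ (such a $j$ exists and is unique). *)

From mathcomp Require Import all_boot.
Set Implicit Arguments. Unset Strict Implicit. Unset Printing Implicit Defensive.

(* An infinite word x = x_1 x_2 ... over an alphabet A is a function
   x : nat -> A; only the values at indices >= 1 are used (x 0 is ignored). *)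

Definition factor_eq (A : Type) (x : nat -> A) (i k n : nat) : Prop :=
  forall t, t < n -> x (i + t) = x (k + t).

Definition r_cond (A : Type) (n : nat) (x : nat -> A) (m : nat) : Prop :=
  exists i, [/\ 1 <= i, i <= m - n & factor_eq x i (m - n + 1) n].

Definition is_r (A : Type) (n : nat) (x : nat -> A) (m : nat) : Prop :=
  [/\ 1 <= m, r_cond n x m & forall m', 1 <= m' -> r_cond n x m' -> m <= m'].

From mathcomp Require Import all_boot.
From mathcomp Require Import zify.

Set Implicit Arguments.
Unset Strict Implicit.

(* By minimality of r(n), the factor x_{r-n+1}^r has exactly one earlier
   occurrence: two occurrences i < j would already make j + n - 1 < r(n)
   satisfy the defining condition.  The occurrence of length n + 1 witnessing
   r(n+1) = r(n) + 1 restricts to an occurrence of length n, hence starts at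
   j, and its last letter gives x_{j+n} = x_{r(n)+1}. *)

Section FactorEq.

Variables (A : Type) (x : nat -> A).

Lemma factor_eq_trans (i j k n : nat) :
  factor_eq x i k n -> factor_eq x j k n -> factor_eq x i j n.
Proof. by move=> fik fjk t ht; rewrite fik // fjk. Qed.

Lemma factor_eq_shorten (i k m n : nat) :
  m <= n -> factor_eq x i k n -> factor_eq x i k m.
Proof. by move=> le_mn fik t ht; apply: fik; apply: leq_trans le_mn. Qed.

Lemma r_cond_repeat (n i j : nat) :
  1 <= i -> i < j -> factor_eq x i j n -> r_cond n x (j + n - 1).
Proof.
move=> i_gt0 lt_ij fij; exists i; split => //; first lia.
by have -> : j + n - 1 - n + 1 = j by lia.
Qed.

Lemma is_r_occurrence_uniq (n m i j : nat) : 0 < n -> is_r n x m ->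
  1 <= i -> i <= m - n -> factor_eq x i (m - n + 1) n ->
  1 <= j -> j <= m - n -> factor_eq x j (m - n + 1) n -> i = j.
Proof.
move=> n_gt0 [_ _ r_min].
wlog lt_ij : i j / i < j => [uniq_lt | i_gt0 _ fi _ le_j fj].
  move=> i_gt0 le_i fi j_gt0 le_j fj.
  by case: (ltngtP i j) => [lt_ij|lt_ji|//];
    [apply: uniq_lt | apply/esym/uniq_lt].
have := r_min _ _ (r_cond_repeat i_gt0 lt_ij (factor_eq_trans fi fj)).
lia.
Qed.

End FactorEq.

Theorem lemma5p5 (A : Type) (x : nat -> A) (n : nat) (hn : 1 <= n)
  (rn : nat) (Hrn : is_r n x rn) (Hrn1 : is_r n.+1 x rn.+1)
  (j : nat) (hj1 : 1 <= j) (hj2 : j < rn - n + 1)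
  (hfac : factor_eq x j (rn - n + 1) n) :
  x (j + n) = x (rn + 1).
Proof.
have [_ [i [i_gt0 le_i fi]] _] := Hrn1.
rewrite subSS in le_i fi.
have eq_ij : i = j.
  apply: (is_r_occurrence_uniq hn Hrn i_gt0 le_i _ hj1) => //; last by lia.
  exact: factor_eq_shorten (leqnSn n) fi.
rewrite -eq_ij (fi n (ltnSn n)); congr x; lia.
Qed.
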